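(* Let $\lambda\in(\frac16,\frac56)$. For every $x\in[0,1]\setminus\mathcal E$, $$h_{F^\lambda}(x)\le1-\max\Big(\limsup_{n\to\infty}\frac{\beta_1(x,n)\log(6\lambda+1)+\beta_2(x,n)\log(6\lambda-1)}{\beta_{0,3}(x,n)\log3+\beta_{1,2}(x,n)\log6},\,0\Big),$$ with equality if $x\in\mathcal I$.
   Context: Construction: $F^\lambda_0\equiv0$ on $[0,1]$. Given $F^\lambda_n$ with its $4^n$ closed intervals of generation $n$ (covering $[0,1]$, disjoint interiors, $F^\lambda_n$ affine on each), on each interval $[a,b]$ of generation $n$, with $\ell=b-a$ and slope $m$, $F^\lambda_{n+1}$ coincides with $F^\lambda_n$ at $a,a+\ell/3,a+2\ell/3,b$, equals $F^\lambda_n(a+\ell/2)+\lambda\ell\sqrt{1+m^2}$ at $a+\ell/2$, and is affine on $[a,a+\ell/3],[a+\ell/3,a+\ell/2],[a+\ell/2,a+2\ell/3],[a+2\ell/3,b]$. $F^\lambda=\lim_nF^\lambda_n$. Pointwise exponent: $f\in\mathcal C^\alpha(x_0)$ if there exist a polynomial $P$ of degree at most $\lfloor\alpha\rfloor$ and $C,\delta>0$ with $|f(x)-P(x-x_0)|\le C|x-x_0|^\alpha$ whenever $|x-x_0|<\delta$; $h_f(x_0)=\sup\{\alpha\ge0:f\in\mathcal C^\alpha(x_0)\}$. Dynamics: $T(x)=3x$ on $[0,\frac13)$, $6x-2$ on $[\frac13,\frac12)$, $4-6x$ on $[\frac12,\frac23)$, $3x-2$ on $[\frac23,1]$; $U(x)=0,1,2,3$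 on these intervals; $u_n(x)=U(T^nx)$; $\beta_i(x,n)=\#\{k<n:u_k(x)=i\}$, $\beta_{i,j}=\beta_i+\beta_j$. $\mathcal E$ is the set of $x$ whose digit sequence is eventually constantly $0$ or eventually constantly $3$; for $x\notin\mathcal E$, $m_n(x)$ is the slope of $F^\lambda_n$ at $x$. $\mathcal I$ is the set of $x\in[0,1]\setminus\mathcal E$ with $\lim_{n\to\infty}|m_n(x)|=+\infty$. *)

From Stdlib Require Import Reals List.
From Coquelicot Require Import Coquelicot.
Open Scope R_scope.

(* A generation-n piece: (a, b, F_n a, F_n b); F_n is affine on [a,b]. *)
Definition piece := (R * R * R * R)%type.

Definition refine_piece (lam : R) (p : piece) : list piece :=
  let '(a, b, fa, fb) := p in
  let l := b - a in
  let m := (fb - fa) / l in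
  let x1 := a + l / 3 in
  let x2 := a + l / 2 in
  let x3 := a + 2 * l / 3 in
  let y1 := fa + m * (l / 3) in
  let y2 := fa + m * (l / 2) + lam * l * sqrt (1 + m ^ 2) in
  let y3 := fa + m * (2 * l / 3) in
  (a, x1, fa, y1) :: (x1, x2, y1, y2) :: (x2, x3, y2, y3) :: (x3, b, y3, fb) :: nil.

Fixpoint pieces (lam : R) (n : nat) : list piece :=
  match n with
  | O => (0, 1, 0, 0) :: nil
  | S k => flat_map (refine_piece lam) (pieces lam k)
  end.

(* Evaluation of the piecewise affine function: use the first piece containing x
   (consecutive pieces agree at common endpoints). Outside [0,1] the value is 0. *)
Fixpoint eval_pieces (l : list piece) (x : R) : R :=
  match l with
  | nil => 0
  | (a, b, fa, fb) :: t =>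
      if Rle_dec a x then if Rle_dec x b then fa + (fb - fa) / (b - a) * (x - a)
                          else eval_pieces t x
      else eval_pieces t x
  end.

Fixpoint slope_pieces (l : list piece) (x : R) : R :=
  match l with
  | nil => 0
  | (a, b, fa, fb) :: t =>
      if Rle_dec a x then if Rle_dec x b then (fb - fa) / (b - a)
                          else slope_pieces t x
      else slope_pieces t x
  end.

Definition Fn (lam : R) (n : nat) (x : R) : R := eval_pieces (pieces lam n) x.

Definition F (lam : R) (x : R) : R := real (Lim_seq (fun n => Fn lam n x)).

Definition slope_n (lam : R) (n : nat) (x : R) : R := slope_pieces (pieces lam n) x.

(* |t|^alpha with the convention 0^alpha = 0. *)
Definition rpow (t alpha : R) : R := if Rlt_dec 0 t then Rpower t alpha else 0.

(* Polynomials as coefficient lists [c0; c1; ...]. *)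
Fixpoint peval (P : list R) (t : R) : R :=
  match P with
  | nil => 0
  | c :: Q => c + t * peval Q t
  end.

(* floor alpha = Int_part alpha *)
Definition pointwise_holder (f : R -> R) (x0 alpha : R) : Prop :=
  exists (P : list R) (C delta : R),
    (length P <= S (Z.to_nat (Int_part alpha)))%nat /\ 0 < C /\ 0 < delta /\
    forall x, Rabs (x - x0) < delta ->
      Rabs (f x - peval P (x - x0)) <= C * rpow (Rabs (x - x0)) alpha.

Definition holder_exponent (f : R -> R) (x0 : R) : Rbar :=
  Lub_Rbar (fun alpha => 0 <= alpha /\ pointwise_holder f x0 alpha).

Definition T (x : R) : R :=
  if Rlt_dec x (1/3) then 3 * x
  else if Rlt_dec x (1/2) then 6 * x - 2
  else if Rlt_dec x (2/3) then 4 - 6 * x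
  else 3 * x - 2.

Definition U (x : R) : nat :=
  if Rlt_dec x (1/3) then 0%nat
  else if Rlt_dec x (1/2) then 1%nat
  else if Rlt_dec x (2/3) then 2%nat
  else 3%nat.

Definition digit (x : R) (n : nat) : nat := U (Nat.iter n T x).

Definition beta (i : nat) (x : R) (n : nat) : nat :=
  length (filter (fun k => Nat.eqb (digit x k) i) (seq 0 n)).

Definition inE (x : R) : Prop :=
  (exists N, forall k, (N <= k)%nat -> digit x k = 0%nat) \/
  (exists N, forall k, (N <= k)%nat -> digit x k = 3%nat).

Definition inI (lam x : R) : Prop :=
  0 <= x <= 1 /\ ~ inE x /\
  is_lim_seq (fun n => Rabs (slope_n lam n x)) p_infty.

Definition ratio (lam x : R) (n : nat) : R :=
  (INR (beta 1 x n) * ln (6 * lam + 1) + INR (beta 2 x n) * ln (6 * lam - 1)) /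
  (INR (beta 0 x n + beta 3 x n) * ln 3 + INR (beta 1 x n + beta 2 x n) * ln 6).

Definition Rbar_max0 (y : Rbar) : Rbar :=
  match y with
  | Finite r => Finite (Rmax r 0)
  | p_infty => p_infty
  | m_infty => Finite 0
  end.

Definition holder_bound (lam x : R) : Rbar :=
  Rbar_minus (Finite 1) (Rbar_max0 (LimSup_seq (ratio lam x))).

From Pilot Require Import Defs.
From Stdlib Require Import Reals Lra Lia List Classical_Prop.
From Coquelicot Require Import Coquelicot.
Open Scope R_scope.

(** Let J_n be the generation-n piece containing x, of width l_n and slope m_n, and put
    w_n = sqrt (1 + m_n^2).  Later generations move the graph over J_n by at most a
    constant times l_n w_n, because l w shrinks by the factor (1 + 6 lam)/6 < 1 from a
    piece to each of its children; so the oscillation of F at scale l_n around x is of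
    order l_n w_n, while the second difference of F across the middle of J_n is exactly
    lam l_n w_n.  As -ln l_n = beta_{0,3} ln 3 + beta_{1,2} ln 6, the second difference
    bounds the exponent by 1 - limsup ln w_n / (-ln l_n).  Along the cells |m_n| is
    multiplied by at least 1 + 6 lam or 6 lam - 1 at the digits 1 and 2 and is unchanged
    at the digits 0 and 3, so ln w_n dominates the numerator of the ratio up to a
    constant.  When |m_n| tends to infinity these factors are sharp up to 1 + o(1), and
    the oscillation estimate gives the matching lower bound. *)

(** * Pieces and their refinement *)

Definition lft (p : piece) : R := let '(a, _, _, _) := p in a.
Definition rgt (p : piece) : R := let '(_, b, _, _) := p in b.
Definition flft (p : piece) : R := let '(_, _, fa, _) := p in fa.
Definition frgt (p : piece) : R := let '(_, _, _, fb) := p in fb.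
Definition width (p : piece) : R := rgt p - lft p.
Definition slope (p : piece) : R := (frgt p - flft p) / width p.
Definition affine (p : piece) (z : R) : R := flft p + slope p * (z - lft p).
Definition in_piece (p : piece) (z : R) : Prop := lft p <= z <= rgt p.
Definition arc (p : piece) : R := sqrt (1 + slope p ^ 2).

Fixpoint chain (l : list piece) : Prop :=
  match l with
  | nil => True
  | p :: t => 0 < width p /\
      match t with nil => True | q :: _ => rgt p = lft q /\ frgt p = flft q end /\
      chain t
  end.

Lemma chain_rgt_le_lft t p q : chain (p :: t) -> In q t -> rgt p <= lft q.
Proof.
  revert p; induction t as [|h t IH]; intros p [_ [Hadj Hc]] Hq; [contradiction|].
  destruct Hadj as [Eph _]; destruct Hq as [<-|Hq]; [lra|].
  specialize (IH h Hc Hq); destruct Hc as [Hh _]; unfold width in Hh; lra.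
Qed.

Lemma chain_width_pos l q : chain l -> In q l -> 0 < width q.
Proof.
  induction l as [|p t IH]; intros Hc Hq; [contradiction|].
  destruct Hc as [Hp [_ Hc]]; destruct Hq as [<-|Hq]; auto.
Qed.

Lemma affine_lft p : affine p (lft p) = flft p.
Proof. unfold affine; ring. Qed.

Lemma affine_rgt p : 0 < width p -> affine p (rgt p) = frgt p.
Proof. unfold affine, slope, width; intros; field; lra. Qed.

Lemma eval_pieces_chain l q z :
  chain l -> In q l -> in_piece q z -> eval_pieces l z = affine q z.
Proof.
  induction l as [|p t IH]; intros Hc Hq Hz; [contradiction|].
  pose proof (fun q => chain_rgt_le_lft t p q Hc) as Hsorted.
  destruct p as [[[a b] fa] fb]; cbn [eval_pieces].
  destruct Hc as [Hw [Hadj Hc]].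
  destruct (Rle_dec a z) as [Haz|Haz]; [destruct (Rle_dec z b) as [Hzb|Hzb]|].
  - destruct Hq as [<-|Hq]; [reflexivity|].
    specialize (Hsorted q Hq); unfold in_piece in Hz; cbn in Hsorted, Hzb.
    destruct t as [|h t]; [contradiction|].
    destruct Hadj as [Eb Efb]; cbn in Eb, Efb.
    destruct Hq as [->|Hq].
    + assert (Hzq : z = lft q) by lra.
      rewrite Hzq, affine_lft, <- Efb, <- Eb.
      exact (affine_rgt (a, b, fa, fb) Hw).
    + pose proof (chain_rgt_le_lft t h q Hc Hq); destruct Hc as [Hh _].
      unfold width in Hh; lra.
  - destruct Hq as [<-|Hq]; [unfold in_piece in Hz; cbn in Hz; lra|auto].
  - destruct Hq as [<-|Hq]; [unfold in_piece in Hz; cbn in Hz; lra|auto].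
Qed.

Lemma slope_pieces_chain l q z :
  chain l -> In q l -> lft q < z < rgt q -> slope_pieces l z = slope q.
Proof.
  induction l as [|p t IH]; intros Hc Hq Hz; [contradiction|].
  pose proof (fun q => chain_rgt_le_lft t p q Hc) as Hsorted.
  destruct p as [[[a b] fa] fb]; cbn [slope_pieces].
  destruct Hc as [_ [_ Hc]].
  destruct (Rle_dec a z) as [Haz|Haz]; [destruct (Rle_dec z b) as [Hzb|Hzb]|].
  - destruct Hq as [<-|Hq]; [reflexivity|].
    specialize (Hsorted q Hq); cbn in Hsorted; lra.
  - destruct Hq as [<-|Hq]; [cbn in Hz; lra|auto].
  - destruct Hq as [<-|Hq]; [cbn in Hz; lra|auto].
Qed.

Section Refinement.
Variable lam : R.

Definition child (i : nat) (p : piece) : piece := nth i (refine_piece lam p) p.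

Lemma chain_refine l : chain l -> chain (flat_map (refine_piece lam) l).
Proof.
  induction l as [|p t IH]; intros Hc; [exact I|].
  destruct Hc as [Hw [Hadj Hc]].
  destruct p as [[[a b] fa] fb]; unfold width in Hw; cbn in Hw |- *.
  unfold width; cbn; repeat split; try lra; try (field; lra).
  - destruct t as [|[[[a' b'] fa'] fb'] t]; [exact I|exact Hadj].
  - exact (IH Hc).
Qed.

Lemma chain_pieces n : chain (pieces lam n).
Proof.
  induction n as [|n IH]; cbn [pieces]; [|exact (chain_refine _ IH)].
  cbn; unfold width; cbn; repeat split; lra.
Qed.

Lemma width_pos_pieces n p : In p (pieces lam n) -> 0 < width p.
Proof. apply chain_width_pos, chain_pieces. Qed.

Lemma child_in_pieces n p i :
  In p (pieces lam n) -> (i < 4)%nat -> In (child i p) (pieces lam (S n)).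
Proof.
  intros Hp Hi; apply in_flat_map; exists p; split; auto.
  apply nth_In; destruct p as [[[a b] fa] fb]; cbn; lia.
Qed.

Lemma Fn_piece n p z : In p (pieces lam n) -> in_piece p z -> Defs.Fn lam n z = affine p z.
Proof. intros; apply eval_pieces_chain; auto using chain_pieces. Qed.

Ltac child_geometry p :=
  let a := fresh "a" in let b := fresh "b" in
  destruct p as [[[a b] ?fa] ?fb]; unfold child, affine, arc, slope, width;
  cbn; unfold width; cbn; intros; repeat split; try ring; field; lra.

Lemma child0_spec p : 0 < width p ->
  lft (child 0 p) = lft p /\ rgt (child 0 p) = lft p + width p / 3 /\
  flft (child 0 p) = flft p /\ slope (child 0 p) = slope p.
Proof. child_geometry p. Qed.

Lemma child1_spec p : 0 < width p ->
  lft (child 1 p) = lft p + width p / 3 /\ rgt (child 1 p) = lft p + width p / 2 /\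
  flft (child 1 p) = affine p (lft p + width p / 3) /\
  slope (child 1 p) = slope p + 6 * lam * arc p.
Proof. child_geometry p. Qed.

Lemma child2_spec p : 0 < width p ->
  lft (child 2 p) = lft p + width p / 2 /\ rgt (child 2 p) = lft p + 2 * width p / 3 /\
  flft (child 2 p) = affine p (lft p + width p / 2) + lam * width p * arc p /\
  slope (child 2 p) = slope p - 6 * lam * arc p.
Proof. child_geometry p. Qed.

Lemma child3_spec p : 0 < width p ->
  lft (child 3 p) = lft p + 2 * width p / 3 /\ rgt (child 3 p) = rgt p /\
  flft (child 3 p) = affine p (lft p + 2 * width p / 3) /\ slope (child 3 p) = slope p.
Proof. child_geometry p. Qed.

Definition breakpoint (J : piece) (e : R) : Prop :=
  e = lft J \/ e = lft J + width J / 3 \/ e = lft J + width J / 2 \/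
  e = lft J + 2 * width J / 3 \/ e = rgt J.

Lemma breakpoint_child_ends J i : 0 < width J -> (i < 4)%nat ->
  breakpoint J (lft (child i J)) /\ breakpoint J (rgt (child i J)).
Proof.
  intros Hw Hi; unfold breakpoint; destruct i as [|[|[|[|i]]]]; try lia.
  - destruct (child0_spec J Hw) as (-> & -> & _); tauto.
  - destruct (child1_spec J Hw) as (-> & -> & _); tauto.
  - destruct (child2_spec J Hw) as (-> & -> & _); tauto.
  - destruct (child3_spec J Hw) as (-> & -> & _); tauto.
Qed.

Lemma child_starting_at J e : 0 < width J -> breakpoint J e -> e < rgt J ->
  exists i, (i < 4)%nat /\ lft (child i J) = e /\ e + width J / 6 <= rgt (child i J).
Proof.
  intros Hw He Her.
  destruct (child0_spec J Hw) as (A1 & A2 & _); destruct (child1_spec J Hw) as (B1 & B2 & _).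
  destruct (child2_spec J Hw) as (C1 & C2 & _); destruct (child3_spec J Hw) as (D1 & D2 & _).
  destruct He as [E|[E|[E|[E|E]]]]; [exists 0%nat|exists 1%nat|exists 2%nat|exists 3%nat|lra];
    rewrite ?A1, ?A2, ?B1, ?B2, ?C1, ?C2, ?D1, ?D2; unfold width in *; repeat split; lra || lia.
Qed.

Lemma child_ending_at J e : 0 < width J -> breakpoint J e -> lft J < e ->
  exists i, (i < 4)%nat /\ rgt (child i J) = e /\ lft (child i J) <= e - width J / 6.
Proof.
  intros Hw He Hle.
  destruct (child0_spec J Hw) as (A1 & A2 & _); destruct (child1_spec J Hw) as (B1 & B2 & _).
  destruct (child2_spec J Hw) as (C1 & C2 & _); destruct (child3_spec J Hw) as (D1 & D2 & _).
  destruct He as [E|[E|[E|[E|E]]]]; [lra|exists 0%nat|exists 1%nat|exists 2%nat|exists 3%nat];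
    rewrite ?A1, ?A2, ?B1, ?B2, ?C1, ?C2, ?D1, ?D2; unfold width in *; repeat split; lra || lia.
Qed.

(* The left end of a piece is the left end of its first child, with the same value. *)
Lemma Fn_lft j : forall k J, In J (pieces lam k) -> Defs.Fn lam (j + k) (lft J) = flft J.
Proof.
  induction j as [|j IH]; intros k J HJ; pose proof (width_pos_pieces _ _ HJ) as Hw.
  - rewrite (Fn_piece _ _ _ HJ) by (unfold in_piece, width in *; lra); apply affine_lft.
  - destruct (child0_spec J Hw) as (E1 & _ & E3 & _).
    replace (S j + k)%nat with (j + S k)%nat by lia.
    rewrite <- E1, <- E3; apply IH, child_in_pieces; auto.
Qed.

Lemma F_lft k J : In J (pieces lam k) -> F lam (lft J) = flft J.
Proof.
  intros HJ; unfold F; rewrite <- (Lim_seq_incr_n _ k).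
  rewrite (Lim_seq_ext _ (fun _ => flft J)) by (intros j; exact (Fn_lft j k J HJ)).
  now rewrite Lim_seq_const.
Qed.

Lemma second_difference_piece k J : In J (pieces lam k) ->
  let u := lft J + width J / 3 in let v := lft J + 2 * width J / 3 in
  F lam ((u + v) / 2) - (F lam u + F lam v) / 2 = lam * width J * arc J.
Proof.
  intros HJ u v; pose proof (width_pos_pieces _ _ HJ) as Hw.
  destruct (child1_spec J Hw) as (B1 & _ & B3 & _).
  destruct (child2_spec J Hw) as (C1 & _ & C3 & _).
  destruct (child3_spec J Hw) as (D1 & _ & D3 & _).
  pose proof (F_lft (S k) _ (child_in_pieces _ _ 1 HJ ltac:(lia))) as F1.
  pose proof (F_lft (S k) _ (child_in_pieces _ _ 2 HJ ltac:(lia))) as F2.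
  pose proof (F_lft (S k) _ (child_in_pieces _ _ 3 HJ ltac:(lia))) as F3.
  rewrite B1, B3 in F1; rewrite C1, C3 in F2; rewrite D1, D3 in F3.
  replace ((u + v) / 2) with (lft J + width J / 2) by (unfold u, v; field).
  unfold u, v; rewrite F1, F2, F3; unfold affine; field.
Qed.

End Refinement.

(** * Convergence of the construction *)

Lemma sqrt_1_plus_sq_shift_le m d : sqrt (1 + (m + d) ^ 2) <= sqrt (1 + m ^ 2) + Rabs d.
Proof.
  set (w := sqrt (1 + m ^ 2)).
  assert (Hw2 : w * w = 1 + m ^ 2) by (apply sqrt_sqrt; nra).
  assert (Hmw : Rabs m <= w).
  { rewrite <- sqrt_Rsqr_abs; apply sqrt_le_1_alt; unfold Rsqr; nra. }
  assert (Hmd : m * d <= w * Rabs d).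
  { eapply Rle_trans; [apply Rle_abs|]; rewrite Rabs_mult.
    apply Rmult_le_compat_r; [apply Rabs_pos|exact Hmw]. }
  rewrite <- (sqrt_pow2 (w + Rabs d)) by (pose proof (Rabs_pos m); pose proof (Rabs_pos d); lra).
  apply sqrt_le_1_alt; pose proof (pow2_abs d); nra.
Qed.

Lemma geometric_increments_partial (u : nat -> R) (C r : R) :
  0 <= r < 1 -> (forall n, Rabs (u (S n) - u n) <= C * r ^ n) ->
  forall m n, (m <= n)%nat -> Rabs (u n - u m) <= C * (r ^ m - r ^ n) / (1 - r).
Proof.
  intros Hr Hu m n Hmn; induction Hmn as [|n Hmn IH].
  - unfold Rminus; rewrite !Rplus_opp_r, Rabs_R0, Rmult_0_r; lra.
  - replace (u (S n) - u m) with ((u (S n) - u n) + (u n - u m)) by ring.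
    replace (C * (r ^ m - r ^ S n) / (1 - r)) with (C * r ^ n + C * (r ^ m - r ^ n) / (1 - r))
      by (cbn [pow]; field; lra).
    eapply Rle_trans; [apply Rabs_triang|]; specialize (Hu n); lra.
Qed.

Lemma Lim_seq_geometric_increments (u : nat -> R) (C r : R) :
  0 <= r < 1 -> (forall n, Rabs (u (S n) - u n) <= C * r ^ n) ->
  Rabs (real (Lim_seq u) - u O) <= C / (1 - r).
Proof.
  intros Hr Hu; pose proof (geometric_increments_partial u C r Hr Hu) as Hpart.
  assert (HC : 0 <= C) by (specialize (Hu O); pose proof (Rabs_pos (u 1%nat - u O)); cbn in Hu; lra).
  assert (Htail : forall m n, (m <= n)%nat -> Rabs (u n - u m) <= C * r ^ m / (1 - r)).
  { intros m n Hmn; eapply Rle_trans; [exact (Hpart m n Hmn)|].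
    apply Rmult_le_compat_r; [apply Rlt_le, Rinv_0_lt_compat; lra|].
    pose proof (pow_le r n (proj1 Hr)); nra. }
  assert (Hcv : ex_finite_lim_seq u).
  { apply ex_lim_seq_cauchy_corr; intros eps.
    assert (Hy : 0 < eps * (1 - r) / (C + 1))
      by (apply Rdiv_lt_0_compat; [apply Rmult_lt_0_compat; [apply cond_pos|]|]; lra).
    destruct (pow_lt_1_zero r ltac:(rewrite Rabs_pos_eq; lra) _ Hy) as [N HN].
    assert (Hsmall : forall m, (N <= m)%nat -> C * r ^ m / (1 - r) < eps).
    { intros m Hm; specialize (HN m Hm); rewrite Rabs_pos_eq in HN by (apply pow_le; lra).
      apply (Rmult_lt_reg_r (1 - r)); [lra|].
      replace (C * r ^ m / (1 - r) * (1 - r)) with (C * r ^ m) by (field; lra).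
      replace (eps * (1 - r) / (C + 1)) with (eps * (1 - r) * / (C + 1)) in HN by reflexivity.
      apply (Rmult_lt_compat_l (C + 1)) in HN; [|lra].
      replace ((C + 1) * (eps * (1 - r) * / (C + 1))) with (eps * (1 - r)) in HN by (field; lra).
      pose proof (pow_le r m (proj1 Hr)); nra. }
    exists N; intros n m Hn Hm; destruct (Nat.le_ge_cases m n) as [Hmn|Hnm].
    - exact (Rle_lt_trans _ _ _ (Htail m n Hmn) (Hsmall m Hm)).
    - rewrite Rabs_minus_sym; exact (Rle_lt_trans _ _ _ (Htail n m Hnm) (Hsmall n Hn)). }
  destruct Hcv as [l Hl]; rewrite (is_lim_seq_unique _ _ Hl); cbn [real].
  apply (is_lim_seq_le (fun n => Rabs (u n - u O)) (fun _ => C / (1 - r))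
           (Rabs (l - u O)) (C / (1 - r))).
  - intros n; specialize (Htail O n (Nat.le_0_l n)); cbn [pow] in Htail; lra.
  - apply (is_lim_seq_abs _ (l - u O)), is_lim_seq_minus'; [exact Hl|apply is_lim_seq_const].
  - apply is_lim_seq_const.
Qed.

Section Contraction.
Variable lam : R.
Hypothesis lam_range : 1/6 < lam < 5/6.

Lemma arc_ge_1 p : 1 <= arc p.
Proof. rewrite <- sqrt_1; apply sqrt_le_1_alt; pose proof (pow2_ge_0 (slope p)); lra. Qed.

Lemma arc_sq p : arc p ^ 2 = 1 + slope p ^ 2.
Proof. apply pow2_sqrt; pose proof (pow2_ge_0 (slope p)); lra. Qed.

Lemma abs_slope_le_arc p : Rabs (slope p) <= arc p.
Proof.
  rewrite <- sqrt_Rsqr_abs; apply sqrt_le_1_alt; unfold Rsqr; cbn [pow]; nra.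
Qed.

Lemma arc_shear_le p d : Rabs d = 6 * lam * arc p ->
  sqrt (1 + (slope p + d) ^ 2) <= (1 + 6 * lam) * arc p.
Proof. intros Hd; pose proof (sqrt_1_plus_sq_shift_le (slope p) d); unfold arc in *; lra. Qed.

Lemma child_width_arc p i : 0 < width p -> (i < 4)%nat ->
  width (child lam i p) = width p / 3 /\ arc (child lam i p) = arc p \/
  width (child lam i p) = width p / 6 /\ arc (child lam i p) <= (1 + 6 * lam) * arc p.
Proof.
  intros Hw Hi; pose proof (arc_ge_1 p); unfold width at 1 3.
  destruct i as [|[|[|[|i]]]]; try lia.
  - destruct (child0_spec lam p Hw) as (-> & -> & _ & Hs).
    left; unfold arc at 1; rewrite Hs; split; [field|reflexivity].
  - destruct (child1_spec lam p Hw) as (-> & -> & _ & Hs).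
    right; unfold arc at 1; rewrite Hs; split; [field|].
    apply arc_shear_le; rewrite Rabs_pos_eq; nra.
  - destruct (child2_spec lam p Hw) as (-> & -> & _ & Hs).
    right; unfold arc at 1; rewrite Hs; split; [field|].
    apply arc_shear_le; rewrite Rabs_left1; nra.
  - destruct (child3_spec lam p Hw) as (-> & -> & _ & Hs).
    left; unfold arc at 1; rewrite Hs; unfold width; split; [field|reflexivity].
Qed.

Lemma child_width_arc_le p i : 0 < width p -> (i < 4)%nat ->
  width (child lam i p) <= width p /\ arc (child lam i p) <= (1 + 6 * lam) * arc p.
Proof.
  intros Hw Hi; pose proof (arc_ge_1 p).
  destruct (child_width_arc p i Hw Hi) as [[-> ->]|[-> ->]]; split; nra.
Qed.

Definition rho : R := (1 + 6 * lam) / 6.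

Lemma rho_range : 1/3 < rho < 1.
Proof. unfold rho; lra. Qed.

Lemma child_shrink p i : 0 < width p -> (i < 4)%nat ->
  width (child lam i p) * arc (child lam i p) <= rho * (width p * arc p).
Proof.
  intros Hw Hi; pose proof (arc_ge_1 p); unfold rho.
  assert (0 < width p * arc p) by (apply Rmult_lt_0_compat; lra).
  destruct (child_width_arc p i Hw Hi) as [[-> ->]|[-> Ha]]; [nra|].
  apply (Rmult_le_compat_l (width p / 6)) in Ha; lra.
Qed.

Lemma child_affine_dev p i z : 0 < width p -> (i < 4)%nat -> in_piece (child lam i p) z ->
  Rabs (affine (child lam i p) z - affine p z) <= lam * width p * arc p.
Proof.
  intros Hw Hi Hz; pose proof (arc_ge_1 p).
  assert (Hb : 0 <= lam * width p * arc p) by (apply Rmult_le_pos; nra).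
  unfold in_piece in Hz; unfold affine at 1.
  destruct i as [|[|[|[|i]]]]; try lia.
  - destruct (child0_spec lam p Hw) as (E1 & _ & E3 & E4).
    rewrite E1, E3, E4; unfold affine; rewrite Rminus_diag, Rabs_R0; lra.
  - destruct (child1_spec lam p Hw) as (E1 & E2 & E3 & E4); rewrite E1, E2 in Hz.
    rewrite E1, E3, E4; unfold affine; apply Rabs_le; nra.
  - destruct (child2_spec lam p Hw) as (E1 & E2 & E3 & E4); rewrite E1, E2 in Hz.
    rewrite E1, E3, E4; unfold affine; apply Rabs_le; nra.
  - destruct (child3_spec lam p Hw) as (E1 & _ & E3 & E4).
    rewrite E1, E3, E4; unfold affine.
    replace (_ - _) with 0 by ring; rewrite Rabs_R0; lra.
Qed.

Lemma child_containing p z : 0 < width p -> in_piece p z ->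
  exists i, (i < 4)%nat /\ in_piece (child lam i p) z.
Proof.
  intros Hw Hz; unfold in_piece in *.
  destruct (child0_spec lam p Hw) as (A1 & A2 & _); destruct (child1_spec lam p Hw) as (B1 & B2 & _).
  destruct (child2_spec lam p Hw) as (C1 & C2 & _); destruct (child3_spec lam p Hw) as (D1 & D2 & _).
  destruct (Rle_dec z (lft p + width p / 3)); [exists 0%nat; rewrite A1, A2; split; [lia|lra]|].
  destruct (Rle_dec z (lft p + width p / 2)); [exists 1%nat; rewrite B1, B2; split; [lia|lra]|].
  destruct (Rle_dec z (lft p + 2 * width p / 3)); [exists 2%nat; rewrite C1, C2; split; [lia|lra]|].
  exists 3%nat; rewrite D1, D2; split; [lia|lra].
Qed.

Lemma descendant_containing k J z : In J (pieces lam k) -> in_piece J z -> forall j,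
  exists D, In D (pieces lam (j + k)) /\ in_piece D z /\
            width D * arc D <= rho ^ j * (width J * arc J).
Proof.
  intros HJ Hz j; induction j as [|j [D [HD [HDz Hsh]]]].
  - exists J; cbn [pow Nat.add]; split; [exact HJ|split; [exact Hz|lra]].
  - pose proof (width_pos_pieces lam _ _ HD) as Hw.
    destruct (child_containing D z Hw HDz) as [i [Hi Hiz]].
    exists (child lam i D); split; [exact (child_in_pieces lam _ _ _ HD Hi)|split; [exact Hiz|]].
    eapply Rle_trans; [exact (child_shrink D i Hw Hi)|].
    cbn [pow]; rewrite Rmult_assoc; apply Rmult_le_compat_l; [pose proof rho_range|]; lra.
Qed.

Lemma Fn_succ_dev n D z : In D (pieces lam n) -> in_piece D z ->
  Rabs (Defs.Fn lam (S n) z - Defs.Fn lam n z) <= lam * (width D * arc D).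
Proof.
  intros HD Hz; pose proof (width_pos_pieces lam _ _ HD) as Hw.
  destruct (child_containing D z Hw Hz) as [i [Hi Hiz]].
  rewrite (Fn_piece lam _ _ _ (child_in_pieces lam _ _ _ HD Hi) Hiz), (Fn_piece lam _ _ _ HD Hz).
  rewrite <- Rmult_assoc; exact (child_affine_dev D i z Hw Hi Hiz).
Qed.

Definition K_aff : R := lam / (1 - rho).

Lemma K_aff_pos : 0 < K_aff.
Proof. unfold K_aff; pose proof rho_range; apply Rdiv_lt_0_compat; lra. Qed.

Lemma F_near_affine k J z : In J (pieces lam k) -> in_piece J z ->
  Rabs (F lam z - affine J z) <= K_aff * (width J * arc J).
Proof.
  intros HJ Hz; unfold F; rewrite <- (Lim_seq_incr_n _ k).
  rewrite <- (Fn_piece lam _ _ _ HJ Hz).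
  replace (K_aff * (width J * arc J)) with (lam * (width J * arc J) / (1 - rho))
    by (unfold K_aff; pose proof rho_range; field; lra).
  apply (Lim_seq_geometric_increments (fun j => Defs.Fn lam (j + k) z)); [pose proof rho_range; lra|].
  intros j; destruct (descendant_containing k J z HJ Hz j) as [D [HD [HDz Hsh]]].
  eapply Rle_trans; [exact (Fn_succ_dev _ D z HD HDz)|].
  replace (lam * (width J * arc J) * rho ^ j) with (lam * (rho ^ j * (width J * arc J))) by ring.
  apply Rmult_le_compat_l; lra.
Qed.

End Contraction.

(** * Oscillation of [F] near ends and breakpoints of pieces *)

Section Oscillation.
Variable lam : R.
Hypothesis lam_range : 1/6 < lam < 5/6.

Definition K_osc : R := 2 * K_aff lam + 1.

Lemma affine_osc J z z' : in_piece J z -> in_piece J z' ->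
  Rabs (affine J z - affine J z') <= arc J * width J.
Proof.
  intros Hz Hz'; unfold affine.
  replace (_ - _) with (slope J * (z - z')) by ring; rewrite Rabs_mult.
  apply Rmult_le_compat; try apply Rabs_pos; [apply abs_slope_le_arc|].
  unfold in_piece, width in *; apply Rabs_le; lra.
Qed.

Lemma F_osc k J z z' : In J (pieces lam k) -> in_piece J z -> in_piece J z' ->
  Rabs (F lam z - F lam z') <= K_osc * arc J * width J.
Proof.
  intros HJ Hz Hz'.
  pose proof (F_near_affine lam lam_range k J z HJ Hz) as H1.
  pose proof (F_near_affine lam lam_range k J z' HJ Hz') as H2.
  pose proof (affine_osc J z z' Hz Hz') as H3.
  replace (F lam z - F lam z') with
    ((F lam z - affine J z) + (affine J z - affine J z') - (F lam z' - affine J z')) by ring.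
  unfold Rminus at 1; eapply Rle_trans; [apply Rabs_triang|]; rewrite Rabs_Ropp.
  pose proof (Rabs_triang (F lam z - affine J z) (affine J z - affine J z')).
  unfold K_osc; lra.
Qed.

Section NearEnd.
Variables (e : piece -> R) (c : nat).
Hypothesis c_lt_4 : (c < 4)%nat.
Hypothesis end_child_spec : forall J, 0 < width J ->
  e (child lam c J) = e J /\ arc (child lam c J) = arc J /\ width (child lam c J) = width J / 3.
Hypothesis end_in_piece : forall J, 0 < width J -> in_piece J (e J).
Hypothesis near_end_in_child : forall J z, 0 < width J -> in_piece J z ->
  Rabs (z - e J) <= width J / 3 -> in_piece (child lam c J) z.

Lemma F_near_end_iter j : forall k J z, In J (pieces lam k) -> in_piece J z ->
  width J * (1/3) ^ j < Rabs (z - e J) ->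
  exists s, 0 <= s <= width J /\ s <= 3 * Rabs (z - e J) /\
            Rabs (F lam z - F lam (e J)) <= K_osc * arc J * s.
Proof.
  induction j as [|j IH]; intros k J z HJ Hz Hj; pose proof (width_pos_pieces lam _ _ HJ) as Hw.
  - pose proof (end_in_piece J Hw); cbn [pow] in Hj.
    enough (Rabs (z - e J) <= width J) by lra.
    unfold in_piece, width in *; apply Rabs_le; lra.
  - destruct (Rlt_dec (width J / 3) (Rabs (z - e J))) as [Hfar|Hnear].
    + exists (width J); split; [lra|split; [lra|]].
      apply (F_osc k); auto.
    + destruct (end_child_spec J Hw) as (Ee & Ea & Ew).
      destruct (IH (S k) (child lam c J) z) as [s (Hs1 & Hs2 & Hs3)].
      * exact (child_in_pieces lam _ _ _ HJ c_lt_4).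
      * apply near_end_in_child; auto; lra.
      * rewrite Ew, Ee; cbn [pow] in Hj; lra.
      * rewrite Ee, Ea, Ew in *; exists s; repeat split; lra.
Qed.

Lemma F_near_end k J z : In J (pieces lam k) -> in_piece J z ->
  exists s, 0 <= s <= width J /\ s <= 3 * Rabs (z - e J) /\
            Rabs (F lam z - F lam (e J)) <= K_osc * arc J * s.
Proof.
  intros HJ Hz; pose proof (width_pos_pieces lam _ _ HJ) as Hw.
  destruct (Req_dec z (e J)) as [->|Hne].
  - exists 0; rewrite !Rminus_diag, !Rabs_R0; repeat split; lra.
  - assert (Hd : 0 < Rabs (z - e J) / width J)
      by (apply Rdiv_lt_0_compat; [apply Rabs_pos_lt; lra|lra]).
    destruct (pow_lt_1_zero (1/3) ltac:(rewrite Rabs_pos_eq; lra) _ Hd) as [j Hj].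
    specialize (Hj j (le_n j)); rewrite Rabs_pos_eq in Hj by (apply pow_le; lra).
    apply (F_near_end_iter j k); auto.
    apply (Rmult_lt_compat_l (width J)) in Hj; [|lra].
    replace (width J * (Rabs (z - e J) / width J)) with (Rabs (z - e J)) in Hj by (field; lra).
    exact Hj.
Qed.

End NearEnd.

Lemma F_near_lft k J z : In J (pieces lam k) -> in_piece J z ->
  exists s, 0 <= s <= width J /\ s <= 3 * Rabs (z - lft J) /\
            Rabs (F lam z - F lam (lft J)) <= K_osc * arc J * s.
Proof.
  apply (F_near_end lft 0); [lia| | |].
  - intros P Hw; destruct (child0_spec lam P Hw) as (E1 & E2 & _ & E4).
    unfold arc, width at 1; rewrite E1, E2, E4; repeat split; field.
  - intros P Hw; unfold in_piece, width in *; lra.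
  - intros P y Hw Hy Hd; destruct (child0_spec lam P Hw) as (E1 & E2 & _).
    unfold in_piece in *; rewrite E1, E2; rewrite Rabs_pos_eq in Hd; lra.
Qed.

Lemma F_near_rgt k J z : In J (pieces lam k) -> in_piece J z ->
  exists s, 0 <= s <= width J /\ s <= 3 * Rabs (z - rgt J) /\
            Rabs (F lam z - F lam (rgt J)) <= K_osc * arc J * s.
Proof.
  apply (F_near_end rgt 3); [lia| | |].
  - intros P Hw; destruct (child3_spec lam P Hw) as (E1 & E2 & _ & E4).
    unfold arc, width at 1; rewrite E1, E2, E4; repeat split; unfold width; field.
  - intros P Hw; unfold in_piece, width in *; lra.
  - intros P y Hw Hy Hd; destruct (child3_spec lam P Hw) as (E1 & E2 & _).
    unfold in_piece, width in *; rewrite E1, E2; rewrite Rabs_left1 in Hd; lra.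
Qed.

Definition K_brk : R := K_osc * (1 + 6 * lam).

Lemma F_osc_child_to_parent k J i z e s : In J (pieces lam k) -> (i < 4)%nat -> 0 <= s ->
  Rabs (F lam z - F lam e) <= K_osc * arc (child lam i J) * s ->
  Rabs (F lam z - F lam e) <= K_brk * arc J * s.
Proof.
  intros HJ Hi Hs Hb; pose proof (width_pos_pieces lam _ _ HJ) as Hw.
  destruct (child_width_arc_le lam lam_range J i Hw Hi) as [_ Ha].
  assert (0 < K_osc) by (unfold K_osc; pose proof (K_aff_pos lam lam_range); lra).
  eapply Rle_trans; [exact Hb|]; unfold K_brk.
  rewrite !Rmult_assoc; apply Rmult_le_compat_l; [lra|].
  rewrite <- Rmult_assoc; apply Rmult_le_compat_r; lra.
Qed.

Lemma F_near_breakpoint k J e z : In J (pieces lam k) -> breakpoint J e -> in_piece J z ->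
  exists s, 0 <= s <= width J /\ s <= 6 * Rabs (z - e) /\
            Rabs (F lam z - F lam e) <= K_brk * arc J * s.
Proof.
  intros HJ He Hz; pose proof (width_pos_pieces lam _ _ HJ) as Hw.
  assert (HeJ : in_piece J e) by (unfold breakpoint, in_piece, width in *; lra).
  destruct (Rle_dec (width J / 6) (Rabs (z - e))) as [Hfar|Hnear].
  { exists (width J); split; [lra|split; [lra|]].
    eapply Rle_trans; [exact (F_osc k J z e HJ Hz HeJ)|].
    pose proof (arc_ge_1 J); unfold K_brk.
    assert (0 < K_osc) by (unfold K_osc; pose proof (K_aff_pos lam lam_range); lra).
    assert (0 < K_osc * arc J * width J) by (repeat apply Rmult_lt_0_compat; lra); nra. }
  unfold in_piece in Hz; destruct (Rle_lt_dec z e) as [Hze|Hez].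
  - rewrite Rabs_left1 in Hnear by lra.
    destruct (Req_dec z e) as [->|Hne].
    { exists 0; rewrite !Rminus_diag, !Rabs_R0; repeat split; lra. }
    destruct (child_ending_at lam J e Hw He ltac:(lra)) as [i (Hi & Er & El)].
    destruct (F_near_rgt (S k) (child lam i J) z (child_in_pieces lam _ _ _ HJ Hi))
      as [s (Hs1 & Hs2 & Hs3)]; [unfold in_piece; lra|].
    rewrite Er in Hs2, Hs3; exists s.
    pose proof (child_width_arc_le lam lam_range J i Hw Hi); repeat split; try lra.
    exact (F_osc_child_to_parent k J i z e s HJ Hi ltac:(lra) Hs3).
  - rewrite Rabs_pos_eq in Hnear by lra.
    destruct (child_starting_at lam J e Hw He ltac:(lra)) as [i (Hi & El & Er)].
    destruct (F_near_lft (S k) (child lam i J) z (child_in_pieces lam _ _ _ HJ Hi))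
      as [s (Hs1 & Hs2 & Hs3)]; [unfold in_piece; lra|].
    rewrite El in Hs2, Hs3; exists s.
    pose proof (child_width_arc_le lam lam_range J i Hw Hi); repeat split; try lra.
    exact (F_osc_child_to_parent k J i z e s HJ Hi ltac:(lra) Hs3).
Qed.

End Oscillation.

(** * The cells of a point and their slopes *)

Section Coding.
Variable lam : R.
Hypothesis lam_range : 1/6 < lam < 5/6.

(* The orientation bit [s] records whether the relative position [t = T^n x] of [x] in its
   cell is measured from the left end ([s = true]) or from the right end. *)
Definition oriented_at (s : bool) (J : piece) (x t : R) : Prop :=
  if s then x = lft J + t * width J else x = rgt J - t * width J.

Definition slope_signed (s : bool) (m : R) : Prop := if s then 0 <= m else m <= 0.

Definition child_index (s : bool) (u : nat) : nat := if s then u else (3 - u)%nat.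

Definition width_factor (u : nat) : R := match u with 1%nat | 2%nat => 1/6 | _ => 1/3 end.

Definition abs_slope_next (u : nat) (mu w : R) : R :=
  match u with 1%nat => mu + 6 * lam * w | 2%nat => 6 * lam * w - mu | _ => mu end.

Lemma U_lt_4 t : (Defs.U t < 4)%nat.
Proof. unfold Defs.U; repeat destruct Rlt_dec; lia. Qed.

Lemma digit_lt_4 x n : (digit x n < 4)%nat.
Proof. apply U_lt_4. Qed.

Lemma child_index_lt_4 s u : (u < 4)%nat -> (child_index s u < 4)%nat.
Proof. unfold child_index; destruct s; lia. Qed.

(* The slope sign follows the orientation: on the decreasing branch of [T] (digit 2)
   both flip, since [|m| <= w < 6 lam w]. *)
Lemma coding_step J s t x : 0 < width J -> 0 <= t <= 1 ->
  oriented_at s J x t -> slope_signed s (slope J) ->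
  let u := Defs.U t in
  let J' := child lam (child_index s u) J in
  let s' := xorb s (Nat.eqb u 2) in
  0 <= Defs.T t <= 1 /\ oriented_at s' J' x (Defs.T t) /\ slope_signed s' (slope J') /\
  Rabs (slope J') = abs_slope_next u (Rabs (slope J)) (arc J) /\
  width J' = width_factor u * width J.
Proof.
  intros Hw Ht Hx Hs; pose proof (arc_ge_1 J) as Ha1; pose proof (abs_slope_le_arc J) as Hma.
  destruct (child0_spec lam J Hw) as (A1 & A2 & _ & A4).
  destruct (child1_spec lam J Hw) as (B1 & B2 & _ & B4).
  destruct (child2_spec lam J Hw) as (C1 & C2 & _ & C4).
  destruct (child3_spec lam J Hw) as (D1 & D2 & _ & D4).
  assert (Harc : arc J < 6 * lam * arc J) by nra.
  assert (Hbd : slope J <= arc J /\ - slope J <= arc J)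
    by (pose proof (Rle_abs (slope J)); pose proof (Rle_abs (- slope J)) as Hn;
        rewrite Rabs_Ropp in Hn; lra).
  unfold oriented_at, slope_signed in *; unfold Defs.U, Defs.T.
  destruct (Rlt_dec t (1/3)); [|destruct (Rlt_dec t (1/2)); [|destruct (Rlt_dec t (2/3))]];
    destruct s; cbn; unfold width in *; cbn [abs_slope_next width_factor];
    rewrite ?A1, ?A2, ?A4, ?B1, ?B2, ?B4, ?C1, ?C2, ?C4, ?D1, ?D2, ?D4;
    repeat split; try lra;
    try rewrite (Rabs_pos_eq (slope J)) by lra; try rewrite (Rabs_left1 (slope J)) by lra;
    try (rewrite Rabs_pos_eq by lra; lra); try (rewrite Rabs_left1 by lra; lra).
Qed.

Fixpoint cell_code (x : R) (n : nat) : piece * bool :=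
  match n with
  | O => ((0, 1, 0, 0), true)
  | S n => let '(J, s) := cell_code x n in
           let u := digit x n in (child lam (child_index s u) J, xorb s (Nat.eqb u 2))
  end.

Definition cell (x : R) (n : nat) : piece := fst (cell_code x n).

Definition Titer (n : nat) (x : R) : R := Nat.iter n Defs.T x.

Lemma cell_code_spec x : 0 <= x <= 1 -> forall n,
  In (cell x n) (pieces lam n) /\ 0 <= Titer n x <= 1 /\
  oriented_at (snd (cell_code x n)) (cell x n) x (Titer n x) /\
  slope_signed (snd (cell_code x n)) (slope (cell x n)).
Proof.
  intros Hx; induction n as [|n (H1 & H2 & H3 & H4)].
  - unfold cell, oriented_at, slope_signed, slope, width; cbn; repeat split; try lra; auto.
  - unfold cell in *; cbn [cell_code]; destruct (cell_code x n) as [J s]; cbn [fst snd] in *.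
    pose proof (width_pos_pieces lam _ _ H1) as Hw.
    destruct (coding_step J s (Titer n x) x Hw H2 H3 H4) as (G1 & G2 & G3 & _).
    split; [apply child_in_pieces, child_index_lt_4, digit_lt_4; exact H1|].
    exact (conj G1 (conj G2 G3)).
Qed.

Lemma cell_succ x : 0 <= x <= 1 -> forall n,
  (exists i, (i < 4)%nat /\ cell x (S n) = child lam i (cell x n)) /\
  Rabs (slope (cell x (S n))) = abs_slope_next (digit x n) (Rabs (slope (cell x n))) (arc (cell x n)) /\
  width (cell x (S n)) = width_factor (digit x n) * width (cell x n).
Proof.
  intros Hx n; destruct (cell_code_spec x Hx n) as (H1 & H2 & H3 & H4).
  unfold cell in *; cbn [cell_code]; destruct (cell_code x n) as [J s]; cbn [fst snd] in *.
  pose proof (width_pos_pieces lam _ _ H1) as Hw.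
  destruct (coding_step J s (Titer n x) x Hw H2 H3 H4) as (_ & _ & _ & G4 & G5).
  split; [|exact (conj G4 G5)].
  exists (child_index s (digit x n)); split; [apply child_index_lt_4, digit_lt_4|reflexivity].
Qed.

End Coding.

Lemma ln_gt_0 y : 1 < y -> 0 < ln y.
Proof. intros; rewrite <- ln_1; apply ln_increasing; lra. Qed.

Section Logs.
Variables (lam x : R).
Hypothesis lam_range : 1/6 < lam < 5/6.

Definition scale_log (n : nat) : R :=
  INR (beta 0 x n + beta 3 x n) * ln 3 + INR (beta 1 x n + beta 2 x n) * ln 6.

Definition growth_log (n : nat) : R :=
  INR (beta 1 x n) * ln (6 * lam + 1) + INR (beta 2 x n) * ln (6 * lam - 1).

Lemma ratio_eq n : ratio lam x n = growth_log n / scale_log n.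
Proof. reflexivity. Qed.

Definition digit_scale (u : nat) : R := match u with 1%nat | 2%nat => ln 6 | _ => ln 3 end.

Definition slope_factor (u : nat) : R :=
  match u with 1%nat => 1 + 6 * lam | 2%nat => 6 * lam - 1 | _ => 1 end.

Lemma beta_succ i n :
  beta i x (S n) = (beta i x n + if Nat.eqb (digit x n) i then 1 else 0)%nat.
Proof.
  unfold beta; rewrite seq_S, filter_app, length_app; cbn.
  destruct (digit x n =? i); reflexivity.
Qed.

Lemma logs_succ n :
  scale_log (S n) = scale_log n + digit_scale (digit x n) /\
  growth_log (S n) = growth_log n + ln (slope_factor (digit x n)).
Proof.
  unfold scale_log, growth_log; rewrite !beta_succ; pose proof (digit_lt_4 x n).
  destruct (digit x n) as [|[|[|[|]]]]; try lia; cbn [Nat.eqb digit_scale slope_factor];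
    rewrite ?Nat.add_0_r, ?plus_INR, ?ln_1; cbn [INR];
    replace (1 + 6 * lam) with (6 * lam + 1) by ring; split; ring.
Qed.

Lemma ln3_lt_ln6 : ln 3 < ln 6.
Proof. apply ln_increasing; lra. Qed.

Lemma scale_log_ge n : INR n * ln 3 <= scale_log n.
Proof.
  induction n as [|n IH]; [unfold scale_log, beta; cbn; lra|].
  rewrite (proj1 (logs_succ n)), S_INR; pose proof ln3_lt_ln6.
  assert (ln 3 <= digit_scale (digit x n)) by (destruct (digit x n) as [|[|[|]]]; cbn; lra).
  lra.
Qed.

Definition ratio_cap : R := ln (6 * lam + 1) / ln 6.

Lemma ratio_cap_range : 0 < ratio_cap < 1.
Proof.
  unfold ratio_cap; pose proof ln3_lt_ln6; pose proof (ln_gt_0 3 ltac:(lra)).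
  assert (0 < ln (6 * lam + 1) < ln 6) by (split; [apply ln_gt_0|apply ln_increasing]; lra).
  split; [apply Rdiv_lt_0_compat; lra|].
  apply (Rmult_lt_reg_r (ln 6)); [lra|]; unfold Rdiv; rewrite Rmult_assoc, Rinv_l; lra.
Qed.

Lemma growth_log_le n : growth_log n <= ratio_cap * scale_log n.
Proof.
  induction n as [|n IH]; [unfold growth_log, scale_log, beta; cbn; lra|].
  destruct (logs_succ n) as [-> ->]; pose proof ratio_cap_range; pose proof ln3_lt_ln6.
  pose proof (ln_gt_0 3 ltac:(lra)).
  assert (E : ratio_cap * ln 6 = ln (1 + 6 * lam))
    by (unfold ratio_cap; replace (1 + 6 * lam) with (6 * lam + 1) by ring; field; lra).
  assert (ln (6 * lam - 1) < ln (1 + 6 * lam)) by (apply ln_increasing; lra).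
  assert (ln (slope_factor (digit x n)) <= ratio_cap * digit_scale (digit x n))
    by (destruct (digit x n) as [|[|[|]]]; cbn; rewrite ?ln_1; nra).
  nra.
Qed.

Lemma ratio_le_cap n : ratio lam x n <= ratio_cap.
Proof.
  rewrite ratio_eq; pose proof (growth_log_le n); pose proof (scale_log_ge n).
  pose proof ratio_cap_range; pose proof (ln_gt_0 3 ltac:(lra)); pose proof (pos_INR n).
  destruct (Req_dec (scale_log n) 0) as [E|E].
  - rewrite E; unfold Rdiv; rewrite Rinv_0, Rmult_0_r; lra.
  - apply (Rmult_le_reg_r (scale_log n)); [nra|].
    unfold Rdiv; rewrite Rmult_assoc, Rinv_l; lra.
Qed.

End Logs.

Section Cell.
Variables (lam x : R).
Hypothesis lam_range : 1/6 < lam < 5/6.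
Hypothesis x_range : 0 <= x <= 1.

Lemma cell_in_pieces n : In (cell lam x n) (pieces lam n).
Proof. exact (proj1 (cell_code_spec lam lam_range x x_range n)). Qed.

Lemma width_cell_pos n : 0 < width (cell lam x n).
Proof. exact (width_pos_pieces lam _ _ (cell_in_pieces n)). Qed.

Lemma ln_width_cell n : ln (width (cell lam x n)) = - scale_log x n.
Proof.
  induction n as [|n IH].
  - unfold cell, scale_log, beta, width; cbn; rewrite Rminus_0_r, ln_1; ring.
  - destruct (cell_succ lam lam_range x x_range n) as (_ & _ & ->).
    rewrite (proj1 (logs_succ lam x n)), ln_mult, IH; [|pose proof (digit_lt_4 x n)|apply width_cell_pos].
    + unfold width_factor, digit_scale; destruct (digit x n) as [|[|[|]]];
        unfold Rdiv; rewrite Rmult_1_l, ln_Rinv; lra.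
    + destruct (digit x n) as [|[|[|]]]; cbn; lra.
Qed.

Lemma width_cell_small eps : 0 < eps -> exists N, forall n, (N <= n)%nat -> width (cell lam x n) < eps.
Proof.
  intros He; pose proof (ln_gt_0 3 ltac:(lra)).
  destruct (INR_archimed (ln 3) (- ln eps)) as [N HN]; [lra|].
  exists N; intros n Hn; apply ln_lt_inv; [apply width_cell_pos|exact He|].
  rewrite ln_width_cell; pose proof (scale_log_ge lam x n).
  assert (INR N <= INR n) by (apply le_INR; exact Hn); nra.
Qed.

Hypothesis x_not_E : ~ inE x.

Lemma Titer_fixed c : Defs.T c = c -> forall j, Nat.iter j Defs.T c = c.
Proof. intros Hc j; induction j as [|j IH]; simpl; [reflexivity|rewrite IH; exact Hc]. Qed.

Lemma Titer_interior n : 0 < Titer n x < 1.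
Proof.
  destruct (cell_code_spec lam lam_range x x_range n) as (_ & Ht & _).
  assert (Hlater : forall k, (n <= k)%nat -> Titer k x = Nat.iter (k - n) Defs.T (Titer n x))
    by (intros k Hk; unfold Titer; rewrite <- Nat.iter_add; f_equal; lia).
  destruct (Req_dec (Titer n x) 0) as [E0|E0]; [|destruct (Req_dec (Titer n x) 1) as [E1|E1]].
  - exfalso; apply x_not_E; left; exists n; intros k Hk; unfold digit; fold (Titer k x).
    rewrite Hlater, E0, Titer_fixed by (auto; unfold Defs.T; destruct Rlt_dec; lra).
    unfold Defs.U; destruct Rlt_dec; [reflexivity|lra].
  - exfalso; apply x_not_E; right; exists n; intros k Hk; unfold digit; fold (Titer k x).
    rewrite Hlater, E1, Titer_fixed by (auto; unfold Defs.T; repeat destruct Rlt_dec; lra).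
    unfold Defs.U; repeat destruct Rlt_dec; try lra; reflexivity.
  - lra.
Qed.

Lemma x_interior_cell n : lft (cell lam x n) < x < rgt (cell lam x n).
Proof.
  destruct (cell_code_spec lam lam_range x x_range n) as (_ & _ & Hx & _).
  pose proof (Titer_interior n); pose proof (width_cell_pos n).
  assert (0 < Titer n x * width (cell lam x n)) by (apply Rmult_lt_0_compat; lra).
  assert (0 < (1 - Titer n x) * width (cell lam x n)) by (apply Rmult_lt_0_compat; lra).
  unfold oriented_at, width in *; destruct (snd (cell_code lam x n)); split; nra.
Qed.

Lemma x_in_cell n : in_piece (cell lam x n) x.
Proof. pose proof (x_interior_cell n); unfold in_piece; lra. Qed.

Lemma slope_n_cell n : slope_n lam n x = slope (cell lam x n).
Proof. apply slope_pieces_chain; [apply chain_pieces|apply cell_in_pieces|apply x_interior_cell]. Qed.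

End Cell.

Lemma arc_le_of_slope mu w : 0 < mu -> 0 <= w -> w ^ 2 = 1 + mu ^ 2 -> w <= mu + 1 / (2 * mu).
Proof.
  intros Hmu Hw Hw2.
  assert (Hq : 0 < 1 / (2 * mu)) by (apply Rdiv_lt_0_compat; lra).
  assert (w ^ 2 <= (mu + 1 / (2 * mu)) ^ 2).
  { rewrite Hw2; replace ((mu + 1 / (2 * mu)) ^ 2) with (1 + mu ^ 2 + (1 / (2 * mu)) ^ 2)
      by (field; lra).
    pose proof (pow2_ge_0 (1 / (2 * mu))); lra. }
  nra.
Qed.

Section SlopeGrowth.
Variable lam : R.
Hypothesis lam_range : 1/6 < lam < 5/6.

Lemma slope_factor_pos u : 0 < slope_factor lam u.
Proof. destruct u as [|[|[|]]]; cbn; lra. Qed.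

Lemma abs_slope_next_ge u mu w : (u < 4)%nat -> 0 <= mu <= w -> 1 <= w ->
  slope_factor lam u * mu <= abs_slope_next lam u mu w /\
  ((u = 1 \/ u = 2)%nat -> 6 * lam - 1 <= abs_slope_next lam u mu w).
Proof.
  intros Hu Hmu Hw; destruct u as [|[|[|[|]]]]; try lia; cbn;
    (split; [nra|intros [|]; try lia; nra]).
Qed.

Lemma abs_slope_next_le u mu w eps : (u < 4)%nat -> 1 <= mu ->
  3 * lam <= (6 * lam - 1) * mu * eps -> 0 <= w -> w ^ 2 = 1 + mu ^ 2 ->
  abs_slope_next lam u mu w <= slope_factor lam u * mu * (1 + eps).
Proof.
  intros Hu Hmu Heps Hw Hw2; pose proof (arc_le_of_slope mu w ltac:(lra) Hw Hw2) as Hwle.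
  assert (0 < (6 * lam - 1) * mu) by nra.
  assert (Heps0 : 0 < eps) by nra.
  assert (Hq : 6 * lam * (1 / (2 * mu)) <= (6 * lam - 1) * eps).
  { replace (6 * lam * (1 / (2 * mu))) with (3 * lam / mu) by (field; lra).
    apply (Rmult_le_reg_r mu); [lra|]; unfold Rdiv; rewrite Rmult_assoc, Rinv_l by lra; nra. }
  destruct u as [|[|[|[|]]]]; try lia; cbn; nra.
Qed.

Lemma ln_abs_slope_next_le u mu w eps : (u < 4)%nat -> 1 <= mu ->
  3 * lam <= (6 * lam - 1) * mu * eps -> 0 <= w -> w ^ 2 = 1 + mu ^ 2 ->
  ln (abs_slope_next lam u mu w) <= ln mu + ln (slope_factor lam u) + eps.
Proof.
  intros Hu Hmu Heps Hw Hw2.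
  pose proof (abs_slope_next_le u mu w eps Hu Hmu Heps Hw Hw2) as Hle.
  pose proof (slope_factor_pos u) as Hf.
  assert (0 < (6 * lam - 1) * mu) by nra.
  assert (0 < eps) by nra.
  assert (Hw1 : 1 <= w) by nra.
  assert (Hpos : 0 < abs_slope_next lam u mu w)
    by (destruct (abs_slope_next_ge u mu w Hu ltac:(nra) Hw1) as [G _]; nra).
  eapply Rle_trans; [exact (ln_le _ _ Hpos Hle)|].
  rewrite !ln_mult by (try apply Rmult_lt_0_compat; lra).
  assert (ln (1 + eps) <= eps) by (rewrite <- (ln_exp eps) at 2; apply ln_le; [lra|apply exp_ineq1_le]).
  lra.
Qed.

End SlopeGrowth.

Lemma LimSup_seq_le_of_eventually (u : nat -> R) (l : R) :
  (forall eps, 0 < eps -> exists N, forall n, (N <= n)%nat -> u n <= l + eps) ->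
  Rbar_le (LimSup_seq u) l.
Proof.
  intros H; destruct (ex_LimSup_seq u) as [L HL]; rewrite (is_LimSup_seq_unique _ _ HL).
  destruct L as [L| |]; cbn in *; auto.
  - apply le_epsilon; intros eps He.
    assert (He2 : 0 < eps / 2) by lra.
    destruct (HL (mkposreal _ He2)) as [Hfreq _]; destruct (H _ He2) as [N HN].
    destruct (Hfreq N) as [n [Hn Hun]]; specialize (HN n Hn); cbn in Hun; lra.
  - destruct (H 1 ltac:(lra)) as [N HN]; destruct (HL (l + 1) N) as [n [Hn Hun]].
    specialize (HN n Hn); lra.
Qed.

Lemma eventually_le_of_LimSup_seq_le (u : nat -> R) (l : R) : Rbar_le (LimSup_seq u) l ->
  forall eps, 0 < eps -> exists N, forall n, (N <= n)%nat -> u n <= l + eps.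
Proof.
  intros H eps He; destruct (ex_LimSup_seq u) as [L HL].
  rewrite (is_LimSup_seq_unique _ _ HL) in H.
  destruct L as [L| |]; cbn in *; try contradiction.
  - destruct (HL (mkposreal _ He)) as [_ [N HN]]; exists N; intros n Hn.
    specialize (HN n Hn); cbn in HN; lra.
  - destruct (HL (l + eps)) as [N HN]; exists N; intros n Hn; specialize (HN n Hn); lra.
Qed.

Section CellSlopes.
Variables (lam x : R).
Hypothesis lam_range : 1/6 < lam < 5/6.
Hypothesis x_range : 0 <= x <= 1.

Definition abs_slope_cell (n : nat) : R := Rabs (slope (cell lam x n)).

Lemma abs_slope_cell_succ n :
  abs_slope_cell (S n) = abs_slope_next lam (digit x n) (abs_slope_cell n) (arc (cell lam x n)).
Proof. exact (proj1 (proj2 (cell_succ lam lam_range x x_range n))). Qed.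

Lemma abs_slope_cell_range n : 0 <= abs_slope_cell n <= arc (cell lam x n).
Proof. split; [apply Rabs_pos|apply abs_slope_le_arc]. Qed.

Lemma abs_slope_cell_succ_ge n :
  slope_factor lam (digit x n) * abs_slope_cell n <= abs_slope_cell (S n).
Proof.
  rewrite abs_slope_cell_succ.
  exact (proj1 (abs_slope_next_ge lam lam_range _ _ _ (digit_lt_4 x n)
                  (abs_slope_cell_range n) (arc_ge_1 _))).
Qed.

Lemma ln_abs_slope_cell_succ_ge n : 0 < abs_slope_cell n ->
  0 < abs_slope_cell (S n) /\
  ln (abs_slope_cell n) + ln (slope_factor lam (digit x n)) <= ln (abs_slope_cell (S n)).
Proof.
  intros Hm; pose proof (abs_slope_cell_succ_ge n) as Hge.
  assert (Hp : 0 < slope_factor lam (digit x n) * abs_slope_cell n)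
    by (apply Rmult_lt_0_compat; auto using slope_factor_pos).
  split; [lra|].
  rewrite <- ln_mult by (auto using slope_factor_pos); rewrite Rmult_comm; apply ln_le; lra.
Qed.

Lemma growth_log_no_shear : (forall k, digit x k <> 1%nat /\ digit x k <> 2%nat) ->
  forall n, growth_log lam x n = 0.
Proof.
  intros Hno n; induction n as [|n IH]; [unfold growth_log, beta; cbn; ring|].
  rewrite (proj2 (logs_succ lam x n)), IH; destruct (Hno n) as [H1 H2].
  pose proof (digit_lt_4 x n); destruct (digit x n) as [|[|[|[|]]]]; try lia; cbn; rewrite ln_1; ring.
Qed.

Lemma growth_log_le_ln_arc : exists C n0, forall n, (n0 <= n)%nat ->
  growth_log lam x n <= ln (arc (cell lam x n)) + C.
Proof.
  assert (Harc : forall n, 0 <= ln (arc (cell lam x n)))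
    by (intros n; rewrite <- ln_1; apply ln_le; [lra|apply arc_ge_1]).
  destruct (classic (exists k, digit x k = 1%nat \/ digit x k = 2%nat)) as [[k Hk]|Hno].
  - assert (Hk1 : 0 < abs_slope_cell (S k)).
    { rewrite abs_slope_cell_succ.
      pose proof (proj2 (abs_slope_next_ge lam lam_range _ _ _ (digit_lt_4 x k)
                           (abs_slope_cell_range k) (arc_ge_1 _)) Hk); lra. }
    assert (Hmono : forall j, 0 < abs_slope_cell (j + S k) /\
      ln (abs_slope_cell (S k)) - growth_log lam x (S k) <=
      ln (abs_slope_cell (j + S k)) - growth_log lam x (j + S k)).
    { induction j as [|j [IH1 IH2]]; [cbn; split; [exact Hk1|lra]|].
      change (S j + S k)%nat with (S (j + S k)).
      destruct (ln_abs_slope_cell_succ_ge _ IH1) as [Hpos Hstep].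
      rewrite (proj2 (logs_succ lam x (j + S k))); split; lra. }
    exists (growth_log lam x (S k) - ln (abs_slope_cell (S k))), (S k); intros n Hn.
    destruct (Hmono (n - S k)%nat) as [G1 G2]; replace (n - S k + S k)%nat with n in * by lia.
    assert (ln (abs_slope_cell n) <= ln (arc (cell lam x n)))
      by (apply ln_le; [exact G1|apply abs_slope_cell_range]).
    lra.
  - exists 0, 0%nat; intros n _.
    rewrite growth_log_no_shear by (intros j; split; intros Hj; apply Hno; exists j; auto).
    specialize (Harc n); lra.
Qed.

Lemma arc_cell_sq n : arc (cell lam x n) ^ 2 = 1 + abs_slope_cell n ^ 2.
Proof. unfold abs_slope_cell; rewrite pow2_abs; apply arc_sq. Qed.

Lemma growth_log_le_of_ratio n c : (1 <= n)%nat -> ratio lam x n <= c ->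
  growth_log lam x n <= c * scale_log x n.
Proof.
  intros Hn Hr; pose proof (scale_log_ge lam x n); pose proof (ln_gt_0 3 ltac:(lra)).
  assert (1 <= INR n) by (apply (le_INR 1); exact Hn).
  assert (Hs : 0 < scale_log x n) by nra.
  rewrite ratio_eq in Hr; apply (Rmult_le_compat_r (scale_log x n)) in Hr; [|lra].
  unfold Rdiv in Hr; rewrite Rmult_assoc, Rinv_l, Rmult_1_r in Hr by lra; exact Hr.
Qed.

Lemma ln_arc_le_abs_slope n : 1 <= abs_slope_cell n ->
  ln (arc (cell lam x n)) <= ln 2 + ln (abs_slope_cell n).
Proof.
  intros Hm; rewrite <- ln_mult by lra; apply ln_le; [pose proof (arc_ge_1 (cell lam x n)); lra|].
  pose proof (arc_le_of_slope (abs_slope_cell n) (arc (cell lam x n)) ltac:(lra)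
                (Rle_trans _ _ _ Rle_0_1 (arc_ge_1 _)) (arc_cell_sq n)) as H.
  assert (1 / (2 * abs_slope_cell n) <= abs_slope_cell n); [|lra].
  apply (Rmult_le_reg_r (2 * abs_slope_cell n)); [lra|].
  replace (1 / (2 * abs_slope_cell n) * (2 * abs_slope_cell n)) with 1 by (field; lra); nra.
Qed.

Lemma ln_abs_slope_cell_le eps N :
  (forall n, (N <= n)%nat -> 1 <= abs_slope_cell n /\ 3 * lam <= (6 * lam - 1) * abs_slope_cell n * eps) ->
  forall j, ln (abs_slope_cell (j + N)) <=
    ln (abs_slope_cell N) + (growth_log lam x (j + N) - growth_log lam x N) + eps * INR j.
Proof.
  intros Hlarge j; induction j as [|j IH]; [cbn; lra|].
  change (S j + N)%nat with (S (j + N)); rewrite abs_slope_cell_succ, S_INR.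
  rewrite (proj2 (logs_succ lam x (j + N))).
  destruct (Hlarge (j + N)%nat ltac:(lia)) as [H1 H2].
  pose proof (ln_abs_slope_next_le lam lam_range (digit x (j + N)) _ (arc (cell lam x (j + N))) eps
                (digit_lt_4 x _) H1 H2 (Rle_trans _ _ _ Rle_0_1 (arc_ge_1 _)) (arc_cell_sq _)).
  lra.
Qed.

Hypothesis x_not_E : ~ inE x.
Hypothesis slopes_unbounded : is_lim_seq (fun n => Rabs (slope_n lam n x)) p_infty.

Lemma abs_slope_cell_large M : exists N, forall n, (N <= n)%nat -> M < abs_slope_cell n.
Proof.
  apply is_lim_seq_spec in slopes_unbounded; destruct (slopes_unbounded M) as [N HN].
  exists N; intros n Hn; unfold abs_slope_cell; rewrite <- (slope_n_cell lam x lam_range x_range x_not_E n).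
  exact (HN n Hn).
Qed.

Lemma ln_arc_le_of_LimSup (r0 a : R) : Rbar_le (LimSup_seq (ratio lam x)) r0 -> a < 1 - r0 ->
  exists C N, forall n, (N <= n)%nat -> ln (arc (cell lam x n)) <= C + (1 - a) * scale_log x n.
Proof.
  intros HL Ha; pose proof (ln_gt_0 3 ltac:(lra)) as Hl3.
  set (eps := (1 - r0 - a) / (1 + / ln 3)).
  assert (Hinv : 0 < / ln 3) by (apply Rinv_0_lt_compat; lra).
  assert (Heps : 0 < eps) by (apply Rdiv_lt_0_compat; lra).
  assert (Hsplit : r0 + eps + eps / ln 3 = 1 - a) by (unfold eps; field; lra).
  destruct (eventually_le_of_LimSup_seq_le _ _ HL eps Heps) as [Na HNa].
  destruct (abs_slope_cell_large (Rmax 1 (3 * lam / ((6 * lam - 1) * eps)))) as [Nb HNb].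
  assert (Hlarge : forall n, (Nb <= n)%nat ->
    1 <= abs_slope_cell n /\ 3 * lam <= (6 * lam - 1) * abs_slope_cell n * eps).
  { intros n Hn; specialize (HNb n Hn).
    pose proof (Rmax_l 1 (3 * lam / ((6 * lam - 1) * eps))) as M1.
    pose proof (Rmax_r 1 (3 * lam / ((6 * lam - 1) * eps))) as M2.
    split; [lra|].
    assert (Hd : 0 < (6 * lam - 1) * eps) by (apply Rmult_lt_0_compat; lra).
    apply (Rmult_le_reg_r (/ ((6 * lam - 1) * eps))); [apply Rinv_0_lt_compat; lra|].
    replace ((6 * lam - 1) * abs_slope_cell n * eps * / ((6 * lam - 1) * eps))
      with (abs_slope_cell n) by (field; lra).
    fold (3 * lam / ((6 * lam - 1) * eps)); lra. }
  exists (ln 2 + ln (abs_slope_cell Nb) - growth_log lam x Nb), (Nat.max (Nat.max Na Nb) 1).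
  intros n Hn.
  pose proof (growth_log_le_of_ratio n (r0 + eps) ltac:(lia) (HNa n ltac:(lia))) as Hg.
  pose proof (ln_arc_le_abs_slope n (proj1 (Hlarge n ltac:(lia)))) as Hw.
  pose proof (ln_abs_slope_cell_le eps Nb Hlarge (n - Nb)) as Hm.
  replace (n - Nb + Nb)%nat with n in Hm by lia; rewrite minus_INR in Hm by lia.
  pose proof (scale_log_ge lam x n) as Hs; pose proof (pos_INR Nb).
  assert (Hn3 : eps * INR n <= eps / ln 3 * scale_log x n).
  { apply (Rmult_le_compat_l eps) in Hs; [|lra].
    replace (eps / ln 3 * scale_log x n) with (eps * scale_log x n / ln 3) by (field; lra).
    apply (Rmult_le_reg_r (ln 3)); [lra|].
    replace (eps * scale_log x n / ln 3 * ln 3) with (eps * scale_log x n) by (field; lra); lra. }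
  assert (Hsum : (r0 + eps) * scale_log x n + eps / ln 3 * scale_log x n = (1 - a) * scale_log x n)
    by (rewrite <- Hsplit; ring).
  assert (0 <= eps * INR Nb) by (apply Rmult_le_pos; lra).
  lra.
Qed.

End CellSlopes.

(** * Holder estimates *)

Lemma exp_le_exp a b : a <= b -> exp a <= exp b.
Proof. intros [H| ->]; [left; apply exp_increasing; exact H|lra]. Qed.

Lemma rpow_nonneg t a : 0 <= rpow t a.
Proof. unfold rpow; destruct Rlt_dec; [left; apply exp_pos|lra]. Qed.

Lemma rpow_le_exponent t a b : 0 <= t < 1 -> b <= a -> rpow t a <= rpow t b.
Proof.
  intros Ht Hab; unfold rpow; destruct Rlt_dec; [|lra]; unfold Rpower; apply exp_le_exp.
  assert (ln t < 0) by (rewrite <- ln_1; apply ln_increasing; lra); nra.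
Qed.

Lemma sq_le_rpow t b : 0 <= t < 1 -> b <= 2 -> t ^ 2 <= rpow t b.
Proof.
  intros Ht Hb; unfold rpow; destruct Rlt_dec as [H|H].
  - rewrite <- (Rpower_pow 2 t H); cbn [INR]; unfold Rpower; apply exp_le_exp.
    assert (ln t < 0) by (rewrite <- ln_1; apply ln_increasing; lra); nra.
  - replace t with 0 by lra; cbn; lra.
Qed.

Lemma rpow_le_Rpower t l b : 0 <= b -> 0 <= t <= l -> 0 < l -> rpow t b <= Rpower l b.
Proof.
  intros Hb Ht Hl; unfold rpow; destruct Rlt_dec.
  - unfold Rpower; apply exp_le_exp, Rmult_le_compat_l; [exact Hb|apply ln_le; lra].
  - left; apply exp_pos.
Qed.

Lemma rpow_le_scaled s d a : 0 <= a <= 1 -> 0 <= s <= 6 * d -> 0 < d -> rpow s a <= 6 * rpow d a.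
Proof.
  intros Ha Hs Hd; apply Rle_trans with (Rpower (6 * d) a); [apply rpow_le_Rpower; lra|].
  unfold rpow; destruct Rlt_dec; [|lra].
  rewrite <- Rpower_mult_distr by lra; apply Rmult_le_compat_r; [left; apply exp_pos|].
  rewrite <- (Rpower_1 6) at 2 by lra; apply Rle_Rpower; lra.
Qed.

Fixpoint sum_abs (P : list R) : R :=
  match P with nil => 0 | c :: Q => Rabs c + sum_abs Q end.

Lemma sum_abs_nonneg P : 0 <= sum_abs P.
Proof. induction P as [|c Q IH]; cbn; [lra|pose proof (Rabs_pos c); lra]. Qed.

Lemma peval_bound P t : Rabs t <= 1 -> Rabs (peval P t) <= sum_abs P.
Proof.
  intros Ht; induction P as [|c Q IH]; cbn; [rewrite Rabs_R0; lra|].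
  eapply Rle_trans; [apply Rabs_triang|]; rewrite Rabs_mult.
  pose proof (Rabs_pos t); pose proof (Rabs_pos (peval Q t)); nra.
Qed.

(* Above exponent 1 only the affine part of the Taylor polynomial matters, and
   capping the exponent at [3/2] keeps the quadratic remainder under control. *)
Lemma pointwise_holder_affine f x0 a : pointwise_holder f x0 a ->
  exists c0 c1 C d, 0 < C /\ 0 < d /\ forall y, Rabs (y - x0) < d ->
    Rabs (f y - (c0 + c1 * (y - x0))) <= C * rpow (Rabs (y - x0)) (Rmin a (3/2)).
Proof.
  intros [P [C [d [_ [HC [Hd H]]]]]].
  set (c0 := match P with nil => 0 | c :: _ => c end).
  set (c1 := match P with _ :: c :: _ => c | _ => 0 end).
  set (Q := match P with _ :: _ :: Q => Q | _ => nil end).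
  assert (HP : forall t, peval P t = c0 + c1 * t + t ^ 2 * peval Q t)
    by (intros t; unfold c0, c1, Q; destruct P as [|c [|e Q']]; cbn; ring).
  exists c0, c1, (C + sum_abs Q), (Rmin d 1); pose proof (sum_abs_nonneg Q).
  split; [lra|split; [apply Rmin_pos; lra|]].
  intros y Hy; pose proof (Rmin_l d 1); pose proof (Rmin_r d 1).
  specialize (H y ltac:(lra)); set (t := y - x0) in *; rewrite HP in H.
  assert (Ht : 0 <= Rabs t < 1) by (split; [apply Rabs_pos|lra]).
  set (b := Rmin a (3/2)).
  assert (G1 : rpow (Rabs t) a <= rpow (Rabs t) b) by (apply rpow_le_exponent, Rmin_l; exact Ht).
  assert (G2 : Rabs t ^ 2 <= rpow (Rabs t) b)
    by (apply sq_le_rpow; [exact Ht|pose proof (Rmin_r a (3/2)); unfold b; lra]).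
  assert (G3 : Rabs (peval Q t) <= sum_abs Q) by (apply peval_bound; lra).
  replace (f y - (c0 + c1 * t)) with ((f y - (c0 + c1 * t + t ^ 2 * peval Q t)) + t ^ 2 * peval Q t)
    by ring.
  eapply Rle_trans; [apply Rabs_triang|]; rewrite Rabs_mult, <- RPow_abs.
  pose proof (rpow_nonneg (Rabs t) b); pose proof (Rabs_pos (peval Q t)).
  assert (Rabs t ^ 2 * Rabs (peval Q t) <= rpow (Rabs t) b * sum_abs Q)
    by (apply Rmult_le_compat; auto using pow2_ge_0).
  assert (C * rpow (Rabs t) a <= C * rpow (Rabs t) b) by (apply Rmult_le_compat_l; lra).
  lra.
Qed.

Lemma exit_index (P : nat -> Prop) n0 k : P n0 -> ~ P (n0 + k)%nat ->
  exists n, (n0 <= n)%nat /\ P n /\ ~ P (S n).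
Proof.
  intros H0; induction k as [|k IH]; intros HN; [rewrite Nat.add_0_r in HN; contradiction|].
  destruct (classic (P (n0 + k)%nat)) as [Hp|Hp]; [|exact (IH Hp)].
  exists (n0 + k)%nat; split; [lia|split; [exact Hp|]].
  replace (S (n0 + k)) with (n0 + S k)%nat by lia; exact HN.
Qed.

Lemma Lub_Rbar_ge_of_interval (E : R -> Prop) (b : R) : 0 < b ->
  (forall a, 0 <= a < b -> E a) -> Rbar_le b (Lub_Rbar E).
Proof.
  intros Hb HE; destruct (Lub_Rbar_correct E) as [Hub _].
  destruct (Lub_Rbar E) as [h| |] eqn:Eh; cbn; auto.
  - destruct (Rle_dec b h) as [|Hn]; auto; exfalso.
    set (a := (Rmax h 0 + b) / 2).
    assert (Ha : 0 <= a < b /\ h < a) by (unfold a, Rmax; destruct Rle_dec; lra).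
    specialize (Hub a (HE a (proj1 Ha))); cbn in Hub; lra.
  - specialize (Hub 0 (HE 0 ltac:(lra))); exact Hub.
Qed.

Lemma affine_second_difference_le (g : R -> R) (q0 q1 x0 u v E : R) :
  Rabs (g u - (q0 + q1 * (u - x0))) <= E -> Rabs (g v - (q0 + q1 * (v - x0))) <= E ->
  Rabs (g ((u + v) / 2) - (q0 + q1 * ((u + v) / 2 - x0))) <= E ->
  Rabs (g ((u + v) / 2) - (g u + g v) / 2) <= 2 * E.
Proof.
  intros Hu Hv Hm; apply Rabs_le_between in Hu, Hv, Hm; apply Rabs_le; lra.
Qed.

Section UpperBound.
Variables (lam x : R).
Hypothesis lam_range : 1/6 < lam < 5/6.
Hypothesis x_range : 0 <= x <= 1.
Hypothesis x_not_E : ~ inE x.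

Lemma LimSup_ratio_le (l C : R) N :
  (forall n, (N <= n)%nat -> growth_log lam x n <= l * scale_log x n + C) ->
  Rbar_le (LimSup_seq (ratio lam x)) l.
Proof.
  intros Hg; apply LimSup_seq_le_of_eventually; intros eps He; pose proof (ln_gt_0 3 ltac:(lra)).
  destruct (INR_archimed (eps * ln 3) (Rabs C)) as [N3 HN3]; [nra|].
  exists (Nat.max N (S N3)); intros n Hn; specialize (Hg n ltac:(lia)).
  pose proof (scale_log_ge lam x n); pose proof (Rle_abs C); pose proof (pos_INR N3).
  assert (INR (S N3) <= INR n) by (apply le_INR; lia); rewrite S_INR in *.
  assert (Hs : 0 < scale_log x n) by nra.
  assert (0 <= eps * (scale_log x n - INR n * ln 3)) by (apply Rmult_le_pos; lra).
  assert (0 <= eps * ln 3 * (INR n - INR N3)) by (apply Rmult_le_pos; [apply Rmult_le_pos|]; lra).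
  assert (C <= eps * scale_log x n) by nra.
  rewrite ratio_eq; apply (Rmult_le_reg_r (scale_log x n)); [exact Hs|].
  unfold Rdiv; rewrite Rmult_assoc, Rinv_l, Rmult_1_r by lra; lra.
Qed.

Lemma ln_arc_le_of_holder a : 0 <= a -> pointwise_holder (F lam) x a ->
  exists c N, forall n, (N <= n)%nat ->
    ln (arc (cell lam x n)) <= c + (1 - Rmin a (3/2)) * scale_log x n.
Proof.
  intros Ha Hh; destruct (pointwise_holder_affine _ _ _ Hh) as (q0 & q1 & C & d & HC & Hd & Hpol).
  set (b := Rmin a (3/2)) in *; assert (Hb : 0 <= b) by (apply Rmin_glb; lra).
  destruct (width_cell_small lam x lam_range x_range d Hd) as [N HN].
  exists (ln (2 * C) - ln lam), N; intros n Hn.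
  pose proof (cell_in_pieces lam x lam_range x_range n) as HJ.
  pose proof (width_cell_pos lam x lam_range x_range n) as Hw.
  pose proof (arc_ge_1 (cell lam x n)) as Ha1; specialize (HN n Hn).
  set (J := cell lam x n) in *.
  assert (Happrox : forall p, in_piece J p ->
            Rabs (F lam p - (q0 + q1 * (p - x))) <= C * Rpower (width J) b).
  { intros p Hp; pose proof (x_in_cell lam x lam_range x_range x_not_E n) as Hx; fold J in Hx.
    assert (Hpx : Rabs (p - x) <= width J) by (unfold in_piece, width in *; apply Rabs_le; lra).
    eapply Rle_trans; [apply Hpol; lra|]; apply Rmult_le_compat_l; [lra|].
    apply rpow_le_Rpower; [exact Hb|split; [apply Rabs_pos|exact Hpx]|exact Hw]. }
  assert (Hsd : lam * width J * arc J <= 2 * (C * Rpower (width J) b)).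
  { rewrite <- (second_difference_piece lam n J HJ).
    apply Rle_trans with (Rabs (F lam ((lft J + width J / 3 + (lft J + 2 * width J / 3)) / 2) -
       (F lam (lft J + width J / 3) + F lam (lft J + 2 * width J / 3)) / 2)); [apply Rle_abs|].
    apply affine_second_difference_le with q0 q1 x; apply Happrox; unfold in_piece, width in *; lra. }
  apply ln_le in Hsd; [|repeat apply Rmult_lt_0_compat; lra].
  rewrite !ln_mult in Hsd by (try apply Rmult_lt_0_compat; try apply exp_pos; lra).
  pose proof (ln_width_cell lam x lam_range x_range n) as Hlw; fold J in Hlw.
  unfold Rpower in Hsd; rewrite ln_exp, Hlw in Hsd.
  rewrite ln_mult by lra; lra.
Qed.

Lemma holder_exponent_le_1 a : 0 <= a -> pointwise_holder (F lam) x a -> a <= 1.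
Proof.
  intros Ha Hh; destruct (ln_arc_le_of_holder a Ha Hh) as (c & N & Hc).
  set (b := Rmin a (3/2)) in *.
  enough (b <= 1) by (unfold b, Rmin in *; destruct Rle_dec; lra).
  destruct (Rle_dec b 1) as [|Hb]; [assumption|exfalso]; pose proof (ln_gt_0 3 ltac:(lra)).
  destruct (INR_archimed ((b - 1) * ln 3) c) as [N2 HN2]; [nra|].
  set (n := Nat.max N N2); specialize (Hc n (Nat.le_max_l _ _)).
  assert (0 <= ln (arc (cell lam x n))) by (rewrite <- ln_1; apply ln_le; [lra|apply arc_ge_1]).
  pose proof (scale_log_ge lam x n); assert (INR N2 <= INR n) by (apply le_INR, Nat.le_max_r).
  assert (0 <= (b - 1) * (scale_log x n - INR n * ln 3)) by (apply Rmult_le_pos; lra).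
  assert (0 <= (b - 1) * ln 3 * (INR n - INR N2)) by (apply Rmult_le_pos; [apply Rmult_le_pos|]; lra).
  nra.
Qed.

Lemma LimSup_ratio_le_of_holder a : 0 <= a -> pointwise_holder (F lam) x a ->
  Rbar_le (LimSup_seq (ratio lam x)) (1 - a).
Proof.
  intros Ha Hh; pose proof (holder_exponent_le_1 a Ha Hh) as Ha1.
  destruct (ln_arc_le_of_holder a Ha Hh) as (c & N1 & Hc).
  rewrite Rmin_left in Hc by lra.
  destruct (growth_log_le_ln_arc lam x lam_range x_range) as (C0 & N2 & HC0).
  apply (LimSup_ratio_le (1 - a) (c + C0) (Nat.max N1 N2)); intros n Hn.
  specialize (Hc n ltac:(lia)); specialize (HC0 n ltac:(lia)); lra.
Qed.

End UpperBound.

Section LowerBound.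
Variables (lam x : R).
Hypothesis lam_range : 1/6 < lam < 5/6.
Hypothesis x_range : 0 <= x <= 1.
Hypothesis x_not_E : ~ inE x.
Variables (a C2 : R) (n2 : nat).
Hypothesis a_range : 0 <= a <= 1.
Hypothesis ln_arc_bound : forall n, (n2 <= n)%nat ->
  ln (arc (cell lam x n)) <= C2 + (1 - a) * scale_log x n.

Lemma arc_mul_le_rpow n s : (n2 <= n)%nat -> 0 <= s <= width (cell lam x n) ->
  arc (cell lam x n) * s <= exp C2 * rpow s a.
Proof.
  intros Hn Hs; pose proof (arc_ge_1 (cell lam x n)) as Ha1; pose proof (exp_pos C2).
  unfold rpow; destruct Rlt_dec as [Hp|Hp]; [|replace s with 0 by lra; rewrite Rmult_0_r; lra].
  specialize (ln_arc_bound n Hn); pose proof (ln_width_cell lam x lam_range x_range n) as Hlw.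
  assert (ln s <= ln (width (cell lam x n))) by (apply ln_le; lra).
  unfold Rpower; rewrite <- exp_plus, <- (exp_ln (arc (cell lam x n) * s)) by (apply Rmult_lt_0_compat; lra).
  apply exp_le_exp; rewrite ln_mult by lra.
  assert (0 <= (1 - a) * (- scale_log x n - ln s)) by (apply Rmult_le_pos; lra).
  nra.
Qed.

Definition K_hol : R := 6 * exp C2 * (K_osc lam + K_brk lam).

Lemma F_increment_via_breakpoint n y e s1 s2 : (n2 <= n)%nat -> y <> x ->
  Rabs (F lam x - F lam e) <= K_osc lam * arc (cell lam x (S n)) * s1 ->
  Rabs (F lam y - F lam e) <= K_brk lam * arc (cell lam x n) * s2 ->
  0 <= s1 <= width (cell lam x (S n)) -> 0 <= s2 <= width (cell lam x n) ->
  s1 <= 6 * Rabs (y - x) -> s2 <= 6 * Rabs (y - x) ->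
  Rabs (F lam y - F lam x) <= K_hol * rpow (Rabs (y - x)) a.
Proof.
  intros Hn Hyx E1 E2 S1 S2 S3 S4.
  assert (Hd : 0 < Rabs (y - x)) by (apply Rabs_pos_lt; lra).
  assert (HK1 : 0 < K_osc lam) by (unfold K_osc; pose proof (K_aff_pos lam lam_range); lra).
  assert (HK2 : 0 < K_brk lam) by (unfold K_brk; apply Rmult_lt_0_compat; lra).
  assert (Hb1 : arc (cell lam x (S n)) * s1 <= exp C2 * (6 * rpow (Rabs (y - x)) a)).
  { eapply Rle_trans; [apply arc_mul_le_rpow; [lia|exact S1]|].
    apply Rmult_le_compat_l; [left; apply exp_pos|apply rpow_le_scaled; lra]. }
  assert (Hb2 : arc (cell lam x n) * s2 <= exp C2 * (6 * rpow (Rabs (y - x)) a)).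
  { eapply Rle_trans; [apply arc_mul_le_rpow; [lia|exact S2]|].
    apply Rmult_le_compat_l; [left; apply exp_pos|apply rpow_le_scaled; lra]. }
  replace (F lam y - F lam x) with ((F lam y - F lam e) - (F lam x - F lam e)) by ring.
  unfold Rminus at 1; eapply Rle_trans; [apply Rabs_triang|]; rewrite Rabs_Ropp.
  apply (Rmult_le_compat_l (K_osc lam)) in Hb1; [|lra].
  apply (Rmult_le_compat_l (K_brk lam)) in Hb2; [|lra].
  rewrite <- Rmult_assoc in Hb1, Hb2; unfold K_hol; lra.
Qed.

Lemma F_increment_at_exit n y : (n2 <= n)%nat ->
  in_piece (cell lam x n) y -> ~ in_piece (cell lam x (S n)) y ->
  Rabs (F lam y - F lam x) <= K_hol * rpow (Rabs (y - x)) a.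
Proof.
  intros Hn Hy Hout.
  destruct (cell_succ lam lam_range x x_range n) as [[i [Hi Echild]] _].
  pose proof (cell_in_pieces lam x lam_range x_range n) as HJ.
  pose proof (cell_in_pieces lam x lam_range x_range (S n)) as HJ'.
  pose proof (x_interior_cell lam x lam_range x_range x_not_E (S n)) as Hx'.
  pose proof (x_in_cell lam x lam_range x_range x_not_E (S n)) as Hxin.
  destruct (breakpoint_child_ends lam (cell lam x n) i (width_pos_pieces lam _ _ HJ) Hi) as [Bl Br].
  rewrite <- Echild in Bl, Br; unfold in_piece in Hout.
  destruct (Rlt_le_dec y (lft (cell lam x (S n)))) as [Hyl|Hyl].
  - destruct (F_near_lft lam lam_range (S n) _ x HJ' Hxin) as [s1 (S1 & S1b & E1)].
    destruct (F_near_breakpoint lam lam_range n _ _ y HJ Bl Hy) as [s2 (S2 & S2b & E2)].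
    apply (F_increment_via_breakpoint n y _ s1 s2 Hn ltac:(lra) E1 E2 S1 S2).
    + rewrite Rabs_pos_eq in S1b by lra; rewrite Rabs_left by lra; lra.
    + rewrite Rabs_left in S2b by lra; rewrite Rabs_left by lra; lra.
  - assert (Hyr : rgt (cell lam x (S n)) < y)
      by (apply Rnot_le_lt; intros Hle; apply Hout; lra).
    destruct (F_near_rgt lam lam_range (S n) _ x HJ' Hxin) as [s1 (S1 & S1b & E1)].
    destruct (F_near_breakpoint lam lam_range n _ _ y HJ Br Hy) as [s2 (S2 & S2b & E2)].
    apply (F_increment_via_breakpoint n y _ s1 s2 Hn ltac:(lra) E1 E2 S1 S2).
    + rewrite Rabs_left in S1b by lra; rewrite Rabs_pos_eq by lra; lra.
    + rewrite Rabs_pos_eq in S2b by lra; rewrite Rabs_pos_eq by lra; lra.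
Qed.

Lemma holder_of_ln_arc_bound : pointwise_holder (F lam) x a.
Proof.
  pose proof (x_interior_cell lam x lam_range x_range x_not_E n2) as Hx2.
  assert (HK : 0 < K_hol).
  { unfold K_hol, K_brk, K_osc; pose proof (K_aff_pos lam lam_range); pose proof (exp_pos C2).
    repeat apply Rmult_lt_0_compat; nra. }
  exists (F lam x :: nil), K_hol, (Rmin (x - lft (cell lam x n2)) (rgt (cell lam x n2) - x)).
  split; [cbn; lia|split; [exact HK|split; [apply Rmin_pos; lra|]]].
  intros y Hy; cbn [peval]; replace (F lam y - (F lam x + (y - x) * 0)) with (F lam y - F lam x) by ring.
  destruct (Req_dec y x) as [->|Hyx].
  { rewrite Rminus_diag, Rabs_R0; apply Rmult_le_pos; [lra|apply rpow_nonneg]. }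
  pose proof (Rmin_l (x - lft (cell lam x n2)) (rgt (cell lam x n2) - x)).
  pose proof (Rmin_r (x - lft (cell lam x n2)) (rgt (cell lam x n2) - x)).
  assert (Hy2 : in_piece (cell lam x n2) y) by (unfold in_piece; apply Rabs_lt_between in Hy; lra).
  destruct (width_cell_small lam x lam_range x_range (Rabs (y - x)) ltac:(apply Rabs_pos_lt; lra))
    as [N HN].
  destruct (exit_index (fun n => in_piece (cell lam x n) y) n2 N Hy2) as [n (Hn & Hin & Hout)].
  { intros Hc; specialize (HN (n2 + N)%nat ltac:(lia)).
    pose proof (x_in_cell lam x lam_range x_range x_not_E (n2 + N)) as Hxc.
    assert (Rabs (y - x) <= width (cell lam x (n2 + N)))
      by (unfold in_piece, width in *; apply Rabs_le; lra).
    lra. }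
  exact (F_increment_at_exit n y Hn Hin Hout).
Qed.

End LowerBound.

Section Exponent.
Variables (lam x : R).
Hypothesis lam_range : 1/6 < lam < 5/6.
Hypothesis x_range : 0 <= x <= 1.
Hypothesis x_not_E : ~ inE x.

Lemma holder_exponent_le_bound : Rbar_le (holder_exponent (F lam) x) (holder_bound lam x).
Proof.
  unfold holder_exponent; apply Lub_Rbar_correct; intros a [Ha Hh].
  pose proof (holder_exponent_le_1 lam x lam_range x_range x_not_E a Ha Hh) as Ha1.
  pose proof (LimSup_ratio_le_of_holder lam x lam_range x_range x_not_E a Ha Hh) as HL.
  unfold holder_bound; destruct (LimSup_seq (ratio lam x)) as [r| |]; cbn in *.
  - unfold Rmax; destruct Rle_dec; lra.
  - contradiction.
  - lra.
Qed.

Lemma holder_bound_spec : exists r0, 0 <= r0 < 1 /\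
  Rbar_le (LimSup_seq (ratio lam x)) r0 /\ holder_bound lam x = 1 - r0.
Proof.
  assert (Hcap : Rbar_le (LimSup_seq (ratio lam x)) (ratio_cap lam)).
  { apply LimSup_seq_le_of_eventually; intros eps He; exists 0%nat; intros n _.
    pose proof (ratio_le_cap lam x lam_range n); lra. }
  pose proof (ratio_cap_range lam lam_range).
  unfold holder_bound; destruct (LimSup_seq (ratio lam x)) as [r| |]; cbn in *.
  - exists (Rmax r 0); split; [unfold Rmax; destruct Rle_dec; lra|].
    split; [apply Rmax_l|f_equal; ring].
  - contradiction.
  - exists 0; split; [lra|split; [exact I|f_equal; ring]].
Qed.

Hypothesis slopes_unbounded : is_lim_seq (fun n => Rabs (slope_n lam n x)) p_infty.

Lemma holder_exponent_ge_bound : Rbar_le (holder_bound lam x) (holder_exponent (F lam) x).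
Proof.
  destruct holder_bound_spec as (r0 & Hr0 & HL & ->).
  apply Lub_Rbar_ge_of_interval; [lra|]; intros a Ha; split; [lra|].
  destruct (ln_arc_le_of_LimSup lam x lam_range x_range x_not_E slopes_unbounded r0 a HL
              ltac:(lra)) as (C2 & n2 & Hb).
  apply (holder_of_ln_arc_bound lam x lam_range x_range x_not_E a C2 n2); [lra|exact Hb].
Qed.

End Exponent.

Theorem proposition3p14 (lam : R) (Hlam : 1/6 < lam < 5/6) :
  forall x : R, 0 <= x <= 1 -> ~ inE x ->
    Rbar_le (holder_exponent (F lam) x) (holder_bound lam x) /\
    (inI lam x -> holder_exponent (F lam) x = holder_bound lam x).
Proof.
  intros x Hx HE; split; [exact (holder_exponent_le_bound lam x Hlam Hx HE)|].
  intros (_ & _ & Hslopes); apply Rbar_le_antisym.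
  - exact (holder_exponent_le_bound lam x Hlam Hx HE).
  - exact (holder_exponent_ge_bound lam x Hlam Hx HE Hslopes).
Qed.
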